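(* Let $p\in(0,1)$ and let $\Phi,\phi$ be the standard normal c.d.f. and p.d.f. For $k\in\mathbb{N}$ let $h_k^{(1)}(\infty)$ be the unique real solution $h$ of $\int_{-\infty}^{\infty}\Phi^k(t+h)\phi(t)\,dt=p$ and let $h_k^{(2)}(\infty)$ be the unique real solution $h$ of $\Big[\int_{-\infty}^{\infty}\Phi(t+h)\phi(t)\,dt\Big]^k=p$. Then, as $k\to\infty$, $h_k^{(2)}(\infty)\sim\sqrt2\,h_k^{(1)}(\infty)\sim2\sqrt{\ln(k)}$.
   Context: $a_k\sim b_k$ means $a_k/b_k\to1$ as $k\to\infty$. These are the analogues, for Student's $t$ with $\nu=\infty$ degrees of freedom (i.e. the standard normal), of the constants of Dudewicz–Dalal's and Rinott's two-stage selection procedures. *)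

From Stdlib Require Import Reals.
From Coquelicot Require Import Coquelicot.
Open Scope R_scope.

Definition phi (t : R) : R := exp (- t ^ 2 / 2) / sqrt (2 * PI).

Definition Phi (x : R) : R := RInt_gen phi (Rbar_locally m_infty) (at_point x).

Definition integral_R (f : R -> R) : R :=
  RInt_gen f (Rbar_locally m_infty) (Rbar_locally p_infty).

(** Write G_k(h) = E[Phi(Z + h)^k] and F(h) = E[Phi(Z + h)] for Z standard normal.
    Both are nondecreasing in h, so it suffices to exhibit points where G_k and F^k lie
    above or below p.  For x >= 0 the tail bounds phi(x + 1) <= 1 - Phi(x) <= exp(-x^2/2)
    give 1 - k exp(-x^2/2) <= Phi(x)^k <= exp(-k phi(x + 1)), while G_k(h) lies between
    Phi(h - a)^k (1 - 2 exp(-a^2/2)) and Phi(h + a)^k + exp(1/2 - a); taking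
    x^2/2 = ln k +- O(1) yields sqrt 2 h_k^(1) = 2 sqrt(ln k) + O(1).  Similarly
    1 - 2 exp(-h^2/4) <= F(h) <= 1 - phi(h/2 + 1)^2 yields h_k^(2) = 2 sqrt(ln k) + O(1),
    and bounded differences give both ratio limits.
    The upper tail bound, and with it the total mass of phi, comes from Owen's function
    T(x, 1): with P(x) = int_0^x phi, P(x)^2 + 2 T(x, 1) has zero derivative and equals 1/4
    at 0, while 0 <= T(x, 1) <= phi(x) phi(0). *)

From Stdlib Require Import Reals Lra Psatz Classical.
From Coquelicot Require Import Coquelicot.
Open Scope R_scope.

Lemma exp_le_compat x y : x <= y -> exp x <= exp y.
Proof. intros [Hlt | ->]; [apply Rlt_le, exp_increasing |]; lra. Qed.

Lemma exp_opp_lt_inv x : 0 < x -> exp (- x) < / x.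
Proof.
  intros Hx. rewrite exp_Ropp. apply Rinv_lt_contravar.
  - apply Rmult_lt_0_compat; [exact Hx | apply exp_pos].
  - pose proof (exp_ineq1_le x). lra.
Qed.

Lemma sqrt_add_le x y : 0 <= x -> 0 <= y -> sqrt (x + y) <= sqrt x + sqrt y.
Proof.
  intros Hx Hy. pose proof (sqrt_pos x). pose proof (sqrt_pos y).
  rewrite <- (sqrt_pow2 (sqrt x + sqrt y)) by lra. apply sqrt_le_1_alt.
  rewrite <- (pow2_sqrt x Hx) at 1. rewrite <- (pow2_sqrt y Hy) at 1. nra.
Qed.

Lemma sqrt_le_sub_add x y : 0 <= y <= x -> sqrt x <= sqrt (x - y) + sqrt y.
Proof. intros Hy. replace x with (x - y + y) at 1 by ring. apply sqrt_add_le; lra. Qed.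

Lemma sqrt2_mul_sqrt2 : sqrt 2 * sqrt 2 = 2.
Proof. apply sqrt_sqrt. lra. Qed.

Lemma sqrt2_mul_sqrt_sqr u : 0 <= u -> (sqrt 2 * sqrt u) ^ 2 = 2 * u.
Proof. intros Hu. rewrite Rpow_mult_distr, !pow2_sqrt; lra. Qed.

Lemma one_sub_mul_le_pow (y : R) (k : nat) : y <= 1 -> 1 - INR k * y <= (1 - y) ^ k.
Proof.
  intros Hy. induction k as [|k IH]; [simpl; lra |].
  rewrite S_INR, <- tech_pow_Rmult. pose proof (pos_INR k). assert (0 <= 1 - y) by lra. nra.
Qed.

Lemma pow_le_exp_opp_mul (y : R) (k : nat) : y <= 1 -> (1 - y) ^ k <= exp (- (INR k * y)).
Proof.
  intros Hy. induction k as [|k IH].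
  - simpl. rewrite Rmult_0_l, Ropp_0, exp_0. lra.
  - rewrite S_INR, <- tech_pow_Rmult.
    replace (- ((INR k + 1) * y)) with (- y + - (INR k * y)) by ring.
    rewrite exp_plus. apply Rmult_le_compat; [lra | apply pow_le; lra | | exact IH].
    pose proof (exp_ineq1_le (- y)). lra.
Qed.

Lemma ln_INR_ge0 k : (1 <= k)%nat -> 0 <= ln (INR k).
Proof. intros Hk. rewrite <- ln_1. apply Rcomplements.ln_le; [lra | apply (le_INR 1), Hk]. Qed.

Lemma INR_mul_exp_opp_ln_add k c : (1 <= k)%nat -> INR k * exp (- (ln (INR k) + c)) = exp (- c).
Proof.
  intros Hk. assert (Hpos : 0 < INR k) by (apply (lt_INR 0); lia).
  rewrite Ropp_plus_distr, exp_plus, exp_Ropp, exp_ln by exact Hpos. field. lra.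
Qed.

Lemma lt_of_nondecreasing (g : R -> R) x y :
  (forall a b, a <= b -> g a <= g b) -> g x < g y -> x < y.
Proof. intros Hg Hxy. destruct (Rlt_or_le x y) as [H | H]; [exact H |]. apply Hg in H. lra. Qed.

Lemma continuous_of_ex_derive (f : R -> R) x : ex_derive f x -> continuous f x.
Proof. apply (@ex_derive_continuous R_AbsRing R_NormedModule). Qed.

Lemma continuous_mult_R (f g : R -> R) x :
  continuous f x -> continuous g x -> continuous (fun t => f t * g t) x.
Proof. apply (@continuous_mult R_UniformSpace R_AbsRing). Qed.

Lemma continuous_shift (f : R -> R) s x : continuous f (x + s) -> continuous (fun t => f (t + s)) x.
Proof.
  intros Hf. apply (continuous_comp (fun t => t + s) f); [| exact Hf].
  apply continuous_of_ex_derive. auto_derive. exact I.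
Qed.

Lemma ex_RInt_continuous_R (f : R -> R) a b : (forall x, continuous f x) -> ex_RInt f a b.
Proof. intros Hf. apply (@ex_RInt_continuous R_CompleteNormedModule). intros x _. apply Hf. Qed.

Lemma RInt_ext_R (f g : R -> R) a b :
  (forall x, Rmin a b < x < Rmax a b -> f x = g x) -> RInt f a b = RInt g a b.
Proof. apply RInt_ext. Qed.

Lemma RInt_Chasles_R (f : R -> R) a b c :
  ex_RInt f a b -> ex_RInt f b c -> RInt f a b + RInt f b c = RInt f a c.
Proof. apply (@RInt_Chasles R_CompleteNormedModule). Qed.

Lemma RInt_scal_R (f : R -> R) (c a b : R) :
  ex_RInt f a b -> RInt (fun t => c * f t) a b = c * RInt f a b.
Proof. apply (@RInt_scal R_CompleteNormedModule). Qed.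

Lemma RInt_comp_lin_R (f : R -> R) (u v a b : R) :
  (forall x, continuous f x) ->
  RInt (fun t => u * f (u * t + v)) a b = RInt f (u * a + v) (u * b + v).
Proof.
  intros Hf. rewrite <- (@RInt_comp_lin R_CompleteNormedModule) by apply ex_RInt_continuous_R, Hf.
  reflexivity.
Qed.

Lemma is_derive_zero_const (f : R -> R) : (forall x, is_derive f x 0) -> forall x, f x = f 0.
Proof.
  intros Hf x.
  assert (Hint := @is_RInt_derive R_CompleteNormedModule f (fun _ => 0) 0 x
                    (fun y _ => Hf y) (fun y _ => continuous_const 0 y)).
  apply is_RInt_unique in Hint. rewrite RInt_const in Hint.
  unfold scal, minus, plus, opp in Hint; simpl in Hint; unfold mult in Hint; simpl in Hint. lra.
Qed.

Definition prim (f : R -> R) (x : R) : R := RInt f 0 x.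

Lemma prim_0 (f : R -> R) : prim f 0 = 0.
Proof. unfold prim. rewrite RInt_point. reflexivity. Qed.

Lemma is_derive_prim (f : R -> R) x : (forall y, continuous f y) -> is_derive (prim f) x (f x).
Proof.
  intros Hf. apply (is_derive_RInt f (prim f) 0); [| apply Hf].
  apply filter_forall. intros b.
  apply (@RInt_correct R_CompleteNormedModule), ex_RInt_continuous_R, Hf.
Qed.

Lemma RInt_prim (f : R -> R) a b : (forall y, continuous f y) -> prim f b - prim f a = RInt f a b.
Proof.
  intros Hf. unfold prim. rewrite <- (RInt_Chasles_R f 0 a b) by apply ex_RInt_continuous_R, Hf.
  ring.
Qed.

Lemma prim_le f x y :
  (forall t, continuous f t) -> (forall t, 0 <= f t) -> x <= y -> prim f x <= prim f y.
Proof.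
  intros Hf Hpos Hxy. assert (0 <= RInt f x y).
  { apply RInt_ge_0; [exact Hxy | apply ex_RInt_continuous_R, Hf | intros; apply Hpos]. }
  pose proof (RInt_prim f x y Hf). lra.
Qed.

Lemma is_RInt_gen_prim (f : R -> R) (Fa Fb : (R -> Prop) -> Prop)
  {FFa : Filter Fa} {FFb : Filter Fb} (la lb : R) :
  (forall x, continuous f x) -> filterlim (prim f) Fa (locally la) ->
  filterlim (prim f) Fb (locally lb) -> is_RInt_gen f Fa Fb (lb - la).
Proof.
  intros Hf Ha Hb.
  assert (Hd : forall y, is_derive (prim f) y (f y)) by (intros y; apply is_derive_prim, Hf).
  assert (HD : forall y, Derive (prim f) y = f y) by (intros y; apply is_derive_unique, Hd).
  apply (is_RInt_gen_ext (Derive (prim f))).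
  - apply filter_forall. intros ab y _. apply HD.
  - apply is_RInt_gen_Derive; [| | exact Ha | exact Hb].
    + apply filter_forall. intros ab y _. eexists. apply Hd.
    + apply filter_forall. intros ab y _.
      apply (continuous_ext f); [intros; symmetry; apply HD | apply Hf].
Qed.

Lemma nondecreasing_le_lim_p (u : R -> R) (l : R) x :
  (forall a b, a <= b -> u a <= u b) -> is_lim u p_infty l -> u x <= l.
Proof.
  intros Hu Hl. change (Rbar_le (u x) l).
  apply (filterlim_le (F := Rbar_locally p_infty) (fun _ => u x) u);
    [| apply (is_lim_const (u x) p_infty) | exact Hl].
  exists x. intros y Hy. apply Hu. lra.
Qed.

Lemma nondecreasing_lim_m_le (u : R -> R) (l : R) x :
  (forall a b, a <= b -> u a <= u b) -> is_lim u m_infty l -> l <= u x.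
Proof.
  intros Hu Hl. change (Rbar_le l (u x)).
  apply (filterlim_le (F := Rbar_locally m_infty) u (fun _ => u x));
    [| exact Hl | apply (is_lim_const (u x) m_infty)].
  exists x. intros y Hy. apply Hu. lra.
Qed.

Lemma nondecreasing_bounded_is_lim_p (u : R -> R) M :
  (forall a b, a <= b -> u a <= u b) -> (forall x, u x <= M) -> exists l : R, is_lim u p_infty l.
Proof.
  intros Hu HM.
  destruct (completeness (fun y => exists x, y = u x)) as [l [Hub Hlub]].
  { exists M. intros y [x ->]. apply HM. }
  { exists (u 0), 0. reflexivity. }
  exists l. apply is_lim_spec. intros eps.
  assert (Hx0 : exists x0, l - eps < u x0).
  { apply NNPP. intros Hn. assert (l <= l - eps); [| pose proof (cond_pos eps); lra].
    apply Hlub. intros y [x ->]. apply Rnot_lt_le. intros Hlt. apply Hn. exists x. exact Hlt. }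
  destruct Hx0 as [x0 Hx0]. exists x0. intros x Hx.
  assert (u x <= l) by (apply Hub; exists x; reflexivity).
  assert (u x0 <= u x) by (apply Hu; lra).
  rewrite Rabs_left1 by lra. lra.
Qed.

Lemma nondecreasing_bounded_is_lim_m (u : R -> R) M :
  (forall a b, a <= b -> u a <= u b) -> (forall x, M <= u x) -> exists l : R, is_lim u m_infty l.
Proof.
  intros Hu HM.
  destruct (nondecreasing_bounded_is_lim_p (fun x => - u (- x)) (- M)) as [l Hl].
  { intros a b Hab. assert (u (- b) <= u (- a)) by (apply Hu; lra). lra. }
  { intros x. specialize (HM (- x)). lra. }
  exists (- l).
  apply (is_lim_ext (fun x => - (- u (- - x))));
    [intros x; rewrite !Ropp_involutive; reflexivity |].
  apply (is_lim_opp (fun x => - u (- - x)) m_infty l).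
  apply (is_lim_comp (fun x => - u (- x)) Ropp m_infty l p_infty); [exact Hl | |].
  - apply is_lim_spec. intros N. exists (- N). intros x Hx. lra.
  - exists 0. intros x _. discriminate.
Qed.

Lemma is_lim_p_infty_shift (u : R -> R) s (l : R) :
  is_lim u p_infty l -> is_lim (fun x => u (x + s)) p_infty l.
Proof.
  intros H. apply is_lim_spec in H. apply is_lim_spec. intros eps.
  destruct (H eps) as [M HM]. exists (M - s). intros x Hx. apply HM. lra.
Qed.

Lemma is_lim_m_infty_shift (u : R -> R) s (l : R) :
  is_lim u m_infty l -> is_lim (fun x => u (x + s)) m_infty l.
Proof.
  intros H. apply is_lim_spec in H. apply is_lim_spec. intros eps.
  destruct (H eps) as [M HM]. exists (M - s). intros x Hx. apply HM. lra.
Qed.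

(** * Improper integrals over R *)

(* Phrasing improper integrals through the limits of the primitive, rather than
   through [is_RInt_gen], makes shifts, comparisons and domination elementary. *)
Definition is_integral_R (f : R -> R) (l : R) : Prop :=
  (forall x, continuous f x) /\
  exists lm lp : R, is_lim (prim f) m_infty lm /\ is_lim (prim f) p_infty lp /\ l = lp - lm.

Lemma integral_R_unique f l : is_integral_R f l -> integral_R f = l.
Proof.
  intros [Hf [lm [lp [Hm [Hp ->]]]]]. unfold integral_R.
  apply (is_RInt_gen_unique (Fa := Rbar_locally m_infty) (Fb := Rbar_locally p_infty)).
  apply (is_RInt_gen_prim f _ _ lm lp Hf Hm Hp).
Qed.

Lemma is_integral_R_ext f g l : (forall t, f t = g t) -> is_integral_R f l -> is_integral_R g l.
Proof.
  intros Hfg [Hf [lm [lp [Hm [Hp El]]]]].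
  assert (E : forall x, prim f x = prim g x) by (intros x; apply RInt_ext_R; intros; apply Hfg).
  split; [intros x; apply (continuous_ext f); [exact Hfg | apply Hf] |].
  exists lm, lp. split; [| split; [| exact El]]; apply (is_lim_ext (prim f)); assumption.
Qed.

Lemma is_integral_R_plus f g lf lg :
  is_integral_R f lf -> is_integral_R g lg -> is_integral_R (fun t => f t + g t) (lf + lg).
Proof.
  intros [Hf [fm [fp [Hfm [Hfp ->]]]]] [Hg [gm [gp [Hgm [Hgp ->]]]]].
  assert (E : forall x, prim f x + prim g x = prim (fun t => f t + g t) x).
  { intros x. unfold prim. symmetry.
    apply (@RInt_plus R_CompleteNormedModule); apply ex_RInt_continuous_R; assumption. }
  split; [intros x; apply (@continuous_plus R_UniformSpace R_AbsRing R_NormedModule); auto |].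
  exists (fm + gm), (fp + gp).
  split; [| split; [| ring]]; apply (is_lim_ext _ _ _ _ E), is_lim_plus'; assumption.
Qed.

Lemma is_integral_R_scal c f l : is_integral_R f l -> is_integral_R (fun t => c * f t) (c * l).
Proof.
  intros [Hf [lm [lp [Hm [Hp ->]]]]].
  assert (E : forall x, c * prim f x = prim (fun t => c * f t) x).
  { intros x. unfold prim. symmetry. apply RInt_scal_R, ex_RInt_continuous_R, Hf. }
  split; [intros x; apply continuous_mult_R; [apply continuous_const | apply Hf] |].
  exists (c * lm), (c * lp). split; [| split; [| ring]]; apply (is_lim_ext _ _ _ _ E).
  - apply (is_lim_scal_l (prim f) c m_infty lm Hm).
  - apply (is_lim_scal_l (prim f) c p_infty lp Hp).
Qed.

Lemma is_integral_R_minus f g lf lg :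
  is_integral_R f lf -> is_integral_R g lg -> is_integral_R (fun t => f t - g t) (lf - lg).
Proof.
  intros Hf Hg. replace (lf - lg) with (lf + -1 * lg) by ring.
  apply (is_integral_R_ext (fun t => f t + -1 * g t)); [intros t; ring |].
  apply is_integral_R_plus, is_integral_R_scal; assumption.
Qed.

Lemma is_integral_R_shift f s l : is_integral_R f l -> is_integral_R (fun t => f (t + s)) l.
Proof.
  intros [Hf [lm [lp [Hm [Hp ->]]]]].
  assert (E : forall x, prim f (x + s) - prim f s = prim (fun t => f (t + s)) x).
  { intros x. rewrite RInt_prim by apply Hf. unfold prim.
    replace s with (1 * 0 + s) at 1 by ring. replace (x + s) with (1 * x + s) by ring.
    rewrite <- RInt_comp_lin_R by apply Hf.
    apply RInt_ext_R. intros t _. rewrite !Rmult_1_l. reflexivity. }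
  split; [intros x; apply continuous_shift, Hf |].
  exists (lm - prim f s), (lp - prim f s). split; [| split; [| ring]]; apply (is_lim_ext _ _ _ _ E).
  - apply is_lim_minus'; [apply is_lim_m_infty_shift, Hm | apply is_lim_const].
  - apply is_lim_minus'; [apply is_lim_p_infty_shift, Hp | apply is_lim_const].
Qed.

Lemma is_integral_R_RInt_le f l a b :
  is_integral_R f l -> (forall t, 0 <= f t) -> a <= b -> RInt f a b <= l.
Proof.
  intros [Hf [lm [lp [Hm [Hp ->]]]]] Hpos Hab.
  assert (Hu : forall x y, x <= y -> prim f x <= prim f y) by (intros; apply prim_le; assumption).
  rewrite <- (RInt_prim f a b Hf).
  pose proof (nondecreasing_le_lim_p _ _ b Hu Hp). pose proof (nondecreasing_lim_m_le _ _ a Hu Hm).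
  lra.
Qed.

Lemma is_integral_R_ge0 f l : is_integral_R f l -> (forall t, 0 <= f t) -> 0 <= l.
Proof.
  intros Hf Hpos. pose proof (is_integral_R_RInt_le f l 0 0 Hf Hpos (Rle_refl 0)) as H.
  rewrite RInt_point in H. exact H.
Qed.

Lemma is_integral_R_le f g lf lg :
  is_integral_R f lf -> is_integral_R g lg -> (forall t, f t <= g t) -> lf <= lg.
Proof.
  intros Hf Hg Hfg. assert (0 <= lg - lf); [| lra].
  apply (is_integral_R_ge0 (fun t => g t - f t)); [apply is_integral_R_minus; assumption |].
  intros t. specialize (Hfg t). lra.
Qed.

Lemma is_integral_R_dominated f g l :
  (forall x, continuous f x) -> (forall t, 0 <= f t <= g t) -> is_integral_R g l ->
  is_integral_R f (integral_R f).
Proof.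
  intros Hf Hfg Hg.
  assert (Hu : forall x y, x <= y -> prim f x <= prim f y)
    by (intros; apply prim_le; [exact Hf | intros t; apply Hfg | assumption]).
  assert (Hinc : forall a b, a <= b -> prim f b - prim f a <= l).
  { intros a b Hab. rewrite RInt_prim by exact Hf. apply Rle_trans with (RInt g a b).
    - apply RInt_le; [exact Hab | apply ex_RInt_continuous_R, Hf | apply ex_RInt_continuous_R, Hg |].
      intros t _. apply Hfg.
    - apply (is_integral_R_RInt_le g); [exact Hg | | exact Hab].
      intros t. specialize (Hfg t). lra. }
  assert (Hbound : forall x, - l <= prim f x <= l).
  { intros x. pose proof (prim_0 f).
    assert (0 <= l) by (apply (is_integral_R_ge0 g l Hg); intros t; specialize (Hfg t); lra).
    destruct (Rle_or_lt 0 x) as [Hx | Hx].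
    - pose proof (Hu 0 x Hx). pose proof (Hinc 0 x Hx). lra.
    - pose proof (Hu x 0 (Rlt_le _ _ Hx)). pose proof (Hinc x 0 (Rlt_le _ _ Hx)). lra. }
  destruct (nondecreasing_bounded_is_lim_p (prim f) l Hu) as [lp Hp]; [apply Hbound |].
  destruct (nondecreasing_bounded_is_lim_m (prim f) (- l) Hu) as [lm Hm]; [apply Hbound |].
  assert (Hint : is_integral_R f (lp - lm)) by (split; [exact Hf | exists lm, lp; auto]).
  rewrite (integral_R_unique f _ Hint). exact Hint.
Qed.

Lemma sqrt_2PI_pos : 0 < sqrt (2 * PI).
Proof. apply sqrt_lt_R0, Rgt_2PI_0. Qed.

Lemma phi_pos x : 0 < phi x.
Proof. apply Rdiv_lt_0_compat; [apply exp_pos | apply sqrt_2PI_pos]. Qed.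

Lemma phi_opp x : phi (- x) = phi x.
Proof. unfold phi. do 3 f_equal. ring. Qed.

Lemma phi_le_abs x y : Rabs x <= y -> phi y <= phi x.
Proof.
  intros Hxy. unfold phi, Rdiv. apply Rmult_le_compat_r.
  - apply Rlt_le, Rinv_0_lt_compat, sqrt_2PI_pos.
  - apply exp_le_compat. pose proof (pow_maj_Rabs y x 2 Hxy). lra.
Qed.

Lemma phi_le_phi0 x : phi x <= phi 0.
Proof.
  unfold phi, Rdiv. apply Rmult_le_compat_r.
  - apply Rlt_le, Rinv_0_lt_compat, sqrt_2PI_pos.
  - apply exp_le_compat. pose proof (pow2_ge_0 x). lra.
Qed.

Lemma phi_sqr x : phi x ^ 2 = exp (- x ^ 2) / (2 * PI).
Proof.
  unfold phi, Rdiv. rewrite Rpow_mult_distr, pow_inv, pow2_sqrt by (pose proof Rgt_2PI_0; lra).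
  f_equal. rewrite <- Rsqr_pow2. unfold Rsqr. rewrite <- exp_plus. f_equal. field.
Qed.

Lemma phi0_sqr : phi 0 ^ 2 = / (2 * PI).
Proof. rewrite phi_sqr. replace (- 0 ^ 2) with 0 by ring. rewrite exp_0. unfold Rdiv. ring. Qed.

Lemma is_derive_phi x : is_derive phi x (- x * phi x).
Proof.
  unfold phi. pose proof sqrt_2PI_pos. auto_derive; [lra |].
  replace (- (x * (x * 1)) * / 2) with (- x ^ 2 / 2) by field. field. lra.
Qed.

Lemma continuous_phi x : continuous phi x.
Proof. apply continuous_of_ex_derive. eexists. apply is_derive_phi. Qed.

Lemma ex_RInt_phi a b : ex_RInt phi a b.
Proof. apply ex_RInt_continuous_R, continuous_phi. Qed.

Lemma phi_le_exp_mul_phi_pred a t : a <= t -> phi t <= exp (/ 2 - a) * phi (t - 1).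
Proof.
  intros Hat. unfold phi, Rdiv. rewrite <- Rmult_assoc, <- exp_plus.
  apply Rmult_le_compat_r; [apply Rlt_le, Rinv_0_lt_compat, sqrt_2PI_pos |].
  apply exp_le_compat. nra.
Qed.

Lemma prim_phi_opp x : prim phi (- x) = - prim phi x.
Proof.
  unfold prim. replace (- x) with (-1 * x + 0) by ring. replace 0 with (-1 * 0 + 0) at 1 by ring.
  rewrite <- (RInt_comp_lin_R phi (-1) 0 0 x) by apply continuous_phi.
  rewrite (RInt_ext_R _ (fun t => -1 * phi t))
    by (intros t _; replace (-1 * t + 0) with (- t) by ring; rewrite phi_opp; reflexivity).
  rewrite RInt_scal_R by apply ex_RInt_phi. ring.
Qed.

(** * Owen's T function and the Gaussian tail *)

Definition owen_T_integrand (h t : R) : R := phi h * phi (h * t) / (1 + t ^ 2).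

Definition owen_T (h a : R) : R := RInt (owen_T_integrand h) 0 a.

Lemma one_add_sqr_pos t : 0 < 1 + t ^ 2.
Proof. nra. Qed.

Lemma continuous_owen_T_integrand h t : continuous (owen_T_integrand h) t.
Proof.
  apply continuous_of_ex_derive. unfold owen_T_integrand, phi.
  pose proof sqrt_2PI_pos. pose proof (one_add_sqr_pos t). auto_derive. lra.
Qed.

Lemma is_derive_owen_T_integrand (h t : R) :
  is_derive (fun z => owen_T_integrand z t) h (- h * phi h * phi (h * t)).
Proof.
  pose proof (one_add_sqr_pos t).
  evar (d : R). replace (- h * phi h * phi (h * t)) with d; unfold d.
  - apply (is_derive_ext (fun z => scal (/ (1 + t ^ 2)) (phi z * phi (z * t)))).
    { intros z. unfold owen_T_integrand, scal; simpl; unfold mult; simpl. unfold Rdiv. ring. }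
    apply is_derive_scal. apply (is_derive_mult phi (fun z => phi (z * t))).
    + apply is_derive_phi.
    + apply (is_derive_comp phi (fun z => z * t)); [apply is_derive_phi |].
      auto_derive; [exact I | reflexivity].
    + intros; apply Rmult_comm.
  - unfold scal, mult, plus; simpl; unfold mult; simpl. field. lra.
Qed.

Lemma continuity_2d_pt_owen_T_derivative h t :
  continuity_2d_pt (fun u v => Derive (fun z => owen_T_integrand z v) u) h t.
Proof.
  apply continuity_2d_pt_ext with (f := fun u v => - u * phi u * phi (u * v)).
  { intros u v. symmetry. apply is_derive_unique, is_derive_owen_T_integrand. }
  assert (Hphi : forall y, continuity_pt phi y).
  { intros y. apply continuity_pt_filterlim, continuous_phi. }
  apply continuity_2d_pt_mult; [apply continuity_2d_pt_mult |].
  - apply continuity_2d_pt_opp, continuity_2d_pt_id1.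
  - apply (continuity_1d_2d_pt_comp phi (fun u _ => u)); [apply Hphi | apply continuity_2d_pt_id1].
  - apply (continuity_1d_2d_pt_comp phi (fun u v => u * v)); [apply Hphi |].
    apply continuity_2d_pt_mult; [apply continuity_2d_pt_id1 | apply continuity_2d_pt_id2].
Qed.

Lemma is_derive_owen_T (h a : R) :
  is_derive (fun z => owen_T z a) h (- phi h * prim phi (a * h)).
Proof.
  unfold owen_T, prim.
  replace (- phi h * RInt phi 0 (a * h))
    with (RInt (fun t => Derive (fun z => owen_T_integrand z t) h) 0 a).
  - apply is_derive_RInt_param.
    + apply filter_forall. intros z t _. eexists. apply is_derive_owen_T_integrand.
    + intros t _. apply continuity_2d_pt_owen_T_derivative.
    + apply filter_forall. intros z. apply ex_RInt_continuous_R, continuous_owen_T_integrand.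
  - rewrite (RInt_ext_R _ (fun t => - phi h * (h * phi (h * t + 0)))).
    2:{ intros t _.
        replace (Derive (fun z => owen_T_integrand z t) h) with (- h * phi h * phi (h * t))
          by (symmetry; apply is_derive_unique, is_derive_owen_T_integrand).
        rewrite Rplus_0_r. ring. }
    rewrite RInt_scal_R by apply (@ex_RInt_comp_lin R_CompleteNormedModule), ex_RInt_phi.
    rewrite RInt_comp_lin_R by apply continuous_phi.
    replace (h * 0 + 0) with 0 by ring. replace (h * a + 0) with (a * h) by ring. reflexivity.
Qed.

Lemma RInt_inv_one_add_sqr a : RInt (fun t => / (1 + t ^ 2)) 0 a = atan a.
Proof.
  replace (atan a) with (atan a - atan 0) by (rewrite atan_0; ring). apply is_RInt_unique.
  apply (@is_RInt_derive R_CompleteNormedModule).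
  - intros t _. replace (1 + t ^ 2) with (1 + t²) by (unfold Rsqr; ring). apply is_derive_atan.
  - intros t _. apply continuous_of_ex_derive. pose proof (one_add_sqr_pos t). auto_derive. lra.
Qed.

Lemma owen_T_0 a : owen_T 0 a = atan a / (2 * PI).
Proof.
  unfold owen_T. rewrite (RInt_ext_R _ (fun t => / (2 * PI) * / (1 + t ^ 2))).
  - rewrite RInt_scal_R, RInt_inv_one_add_sqr; [unfold Rdiv; ring |].
    apply ex_RInt_continuous_R. intros t. apply continuous_of_ex_derive.
    pose proof (one_add_sqr_pos t). auto_derive. lra.
  - intros t _. unfold owen_T_integrand. rewrite Rmult_0_l, <- phi0_sqr. unfold Rdiv. ring.
Qed.

Lemma owen_T_bounds h a : 0 <= a -> 0 <= owen_T h a <= a * (phi h * phi 0).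
Proof.
  intros Ha. unfold owen_T.
  assert (Hint : ex_RInt (owen_T_integrand h) 0 a)
    by (apply ex_RInt_continuous_R; intros; apply continuous_owen_T_integrand).
  assert (Hk : forall t, 0 <= owen_T_integrand h t <= phi h * phi 0).
  { intros t. unfold owen_T_integrand. pose proof (one_add_sqr_pos t).
    pose proof (phi_pos h). pose proof (phi_pos (h * t)). pose proof (phi_le_phi0 (h * t)).
    split; [apply Rdiv_le_0_compat; nra |].
    apply Rle_trans with (phi h * phi (h * t)); [| nra].
    unfold Rdiv. rewrite <- (Rmult_1_r (phi h * phi (h * t))) at 2.
    apply Rmult_le_compat_l; [nra |]. rewrite <- Rinv_1 at 2. apply Rinv_le_contravar; nra. }
  split.
  - apply RInt_ge_0; [exact Ha | exact Hint | intros t _; apply Hk].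
  - replace (a * (phi h * phi 0)) with (RInt (fun _ => phi h * phi 0) 0 a)
      by (rewrite RInt_const; unfold scal; simpl; unfold mult; simpl; ring).
    apply RInt_le; [exact Ha | exact Hint | apply ex_RInt_const | intros t _; apply Hk].
Qed.

Lemma prim_phi_sqr_add_owen_T x : prim phi x ^ 2 + 2 * owen_T x 1 = / 4.
Proof.
  set (F z := prim phi z ^ 2 + 2 * owen_T z 1).
  assert (Hd : forall y, is_derive F y
            (INR 2 * phi y * prim phi y ^ Nat.pred 2 + 2 * (- phi y * prim phi (1 * y)))).
  { intros y. apply (@is_derive_plus R_AbsRing R_NormedModule).
    - apply (is_derive_pow (prim phi) 2), is_derive_prim, continuous_phi.
    - apply (is_derive_scal (fun z => owen_T z 1)), is_derive_owen_T. }
  assert (Hd0 : forall y, is_derive F y 0).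
  { intros y. specialize (Hd y). rewrite Rmult_1_l in Hd.
    replace (INR 2 * phi y * prim phi y ^ Nat.pred 2 + 2 * (- phi y * prim phi y)) with 0 in Hd
      by (simpl; ring).
    exact Hd. }
  change (F x = / 4). rewrite (is_derive_zero_const F Hd0 x). unfold F.
  rewrite prim_0, owen_T_0, atan_1. field. apply PI_neq0.
Qed.

Lemma half_sub_prim_phi_bounds x : 0 <= x -> 0 <= / 2 - prim phi x <= exp (- x ^ 2 / 2).
Proof.
  intros Hx.
  assert (HP : 0 <= prim phi x).
  { apply RInt_ge_0; [exact Hx | apply ex_RInt_phi | intros t _; apply Rlt_le, phi_pos]. }
  assert (Hphi : phi x * phi 0 = exp (- x ^ 2 / 2) / (2 * PI)).
  { assert (E : phi x = exp (- x ^ 2 / 2) * phi 0).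
    { unfold phi. replace (- 0 ^ 2 / 2) with 0 by field. rewrite exp_0.
      pose proof sqrt_2PI_pos. field. lra. }
    rewrite E, Rmult_assoc. unfold Rdiv. rewrite <- phi0_sqr. ring. }
  pose proof (prim_phi_sqr_add_owen_T x). destruct (owen_T_bounds x 1 ltac:(lra)) as [T0 T1].
  pose proof (exp_pos (- x ^ 2 / 2)). pose proof PI2_3_2.
  assert (Hfac : (/ 2 - prim phi x) * (/ 2 + prim phi x) = 2 * owen_T x 1) by nra.
  split; [nra |].
  assert (/ 2 - prim phi x <= 4 * owen_T x 1) by nra.
  rewrite Hphi in T1. apply Rle_trans with (4 * (exp (- x ^ 2 / 2) / (2 * PI))); [lra |].
  apply (Rmult_le_reg_r (2 * PI)); [lra |]. unfold Rdiv.
  rewrite Rmult_assoc, (Rmult_assoc (exp _)), Rinv_l by lra. nra.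
Qed.

Lemma is_lim_exp_opp_sqr_half : is_lim (fun x => exp (- x ^ 2 / 2)) p_infty 0.
Proof.
  apply (is_lim_comp exp (fun x => - x ^ 2 / 2) p_infty 0 m_infty).
  - apply is_lim_exp_m.
  - apply is_lim_spec. intros M. exists (2 * Rabs M + 1). intros x Hx.
    pose proof (Rabs_pos M). pose proof (Rle_abs (- M)). rewrite Rabs_Ropp in *. nra.
  - exists 0. intros x _. discriminate.
Qed.

Lemma is_lim_prim_phi_p : is_lim (prim phi) p_infty (/ 2).
Proof.
  set (e x := exp (- x ^ 2 / 2)).
  apply (is_lim_le_le_loc (fun x => / 2 - e x) (fun x => / 2 + e x) (prim phi) p_infty (/ 2)).
  - exists 0. intros x Hx. pose proof (half_sub_prim_phi_bounds x (Rlt_le _ _ Hx)).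
    pose proof (exp_pos (- x ^ 2 / 2)). unfold e. lra.
  - pose proof (is_lim_minus' (fun _ => / 2) e p_infty (/ 2) 0
                  (is_lim_const (/ 2) p_infty) is_lim_exp_opp_sqr_half) as H.
    rewrite Rminus_0_r in H. exact H.
  - pose proof (is_lim_plus' (fun _ => / 2) e p_infty (/ 2) 0
                  (is_lim_const (/ 2) p_infty) is_lim_exp_opp_sqr_half) as H.
    rewrite Rplus_0_r in H. exact H.
Qed.

Lemma is_lim_prim_phi_m : is_lim (prim phi) m_infty (- / 2).
Proof.
  apply (is_lim_ext (fun x => - prim phi (- x))); [intros x; rewrite prim_phi_opp; ring |].
  apply (is_lim_opp (fun x => prim phi (- x)) m_infty (/ 2)).
  apply (is_lim_comp (prim phi) Ropp m_infty (/ 2) p_infty).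
  - apply is_lim_prim_phi_p.
  - apply is_lim_spec. intros M. exists (- M). intros x Hx. lra.
  - exists 0. intros x _. discriminate.
Qed.

Lemma is_integral_R_phi : is_integral_R phi 1.
Proof.
  split; [exact continuous_phi |]. exists (- / 2), (/ 2).
  split; [exact is_lim_prim_phi_m | split; [exact is_lim_prim_phi_p | field]].
Qed.

Lemma at_point_filterlim (f : R -> R) x : filterlim f (at_point x) (locally (f x)).
Proof. intros P HP. unfold filtermap, at_point. apply locally_singleton, HP. Qed.

Lemma Phi_eq x : Phi x = / 2 + prim phi x.
Proof.
  unfold Phi. apply (is_RInt_gen_unique (Fa := Rbar_locally m_infty) (Fb := at_point x)).
  replace (/ 2 + prim phi x) with (prim phi x - - / 2) by ring.
  apply (is_RInt_gen_prim phi _ _ (- / 2) (prim phi x) continuous_phi is_lim_prim_phi_m).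
  apply at_point_filterlim.
Qed.

Lemma is_derive_Phi x : is_derive Phi x (phi x).
Proof.
  apply (is_derive_ext (fun y => / 2 + prim phi y)); [intros y; symmetry; apply Phi_eq |].
  evar (d : R). replace (phi x) with d; unfold d.
  - apply (@is_derive_plus R_AbsRing R_NormedModule);
      [apply is_derive_const | apply is_derive_prim, continuous_phi].
  - unfold plus, zero; simpl. ring.
Qed.

Lemma continuous_Phi x : continuous Phi x.
Proof. apply continuous_of_ex_derive. eexists. apply is_derive_Phi. Qed.

Lemma Phi_sub a b : Phi b - Phi a = RInt phi a b.
Proof. rewrite !Phi_eq, <- (RInt_prim phi a b continuous_phi). lra. Qed.

Lemma Phi_le x y : x <= y -> Phi x <= Phi y.
Proof.
  intros Hxy. assert (0 <= RInt phi x y).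
  { apply RInt_ge_0; [exact Hxy | apply ex_RInt_phi | intros t _; apply Rlt_le, phi_pos]. }
  pose proof (Phi_sub x y). lra.
Qed.

Lemma Phi_opp x : Phi (- x) = 1 - Phi x.
Proof. rewrite !Phi_eq, prim_phi_opp. lra. Qed.

Lemma Phi_tail_le x : 0 <= x -> 1 - Phi x <= exp (- x ^ 2 / 2).
Proof. intros Hx. rewrite Phi_eq. pose proof (half_sub_prim_phi_bounds x Hx). lra. Qed.

Lemma Phi_bounds x : 0 <= Phi x <= 1.
Proof.
  assert (Hpos : forall y, 0 <= y -> / 2 <= Phi y <= 1).
  { intros y Hy. pose proof (half_sub_prim_phi_bounds y Hy) as Htail.
    pose proof (Phi_le 0 y Hy) as Hmono. rewrite !Phi_eq, prim_0 in *. lra. }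
  destruct (Rle_or_lt 0 x) as [Hx | Hx].
  - pose proof (Hpos x Hx). lra.
  - replace x with (- - x) by ring. rewrite Phi_opp. pose proof (Hpos (- x)). lra.
Qed.

Lemma Phi_tail_ge x : 0 <= x -> phi (x + 1) <= 1 - Phi x.
Proof.
  intros Hx.
  assert (Hint : RInt (fun _ => phi (x + 1)) x (x + 1) <= RInt phi x (x + 1)).
  { apply RInt_le; [lra | apply ex_RInt_const | apply ex_RInt_phi |].
    intros t Ht. apply phi_le_abs. rewrite Rabs_pos_eq; lra. }
  rewrite RInt_const, <- Phi_sub in Hint.
  unfold scal in Hint; simpl in Hint; unfold mult in Hint; simpl in Hint.
  pose proof (Phi_bounds (x + 1)). nra.
Qed.

(** * Smoothing a distribution function by the normal density *)

(* [gauss_smooth Psi h] is E[Psi(Z + h)] for Z standard normal: h_k^(1) solves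
   [gauss_smooth (fun y => Phi y ^ k) h = p] and h_k^(2) solves [gauss_smooth Phi h ^ k = p]. *)
Definition gauss_smooth (Psi : R -> R) (h : R) : R := integral_R (fun t => Psi (t + h) * phi t).

Section GaussSmooth.

Variable Psi : R -> R.
Hypothesis Psi_cont : forall x, continuous Psi x.
Hypothesis Psi_le : forall x y, x <= y -> Psi x <= Psi y.
Hypothesis Psi_bounds : forall x, 0 <= Psi x <= 1.

Lemma continuous_gauss_smooth_integrand h x : continuous (fun t => Psi (t + h) * phi t) x.
Proof. apply continuous_mult_R; [apply continuous_shift, Psi_cont | apply continuous_phi]. Qed.

Lemma gauss_smooth_integrand_bounds h t : 0 <= Psi (t + h) * phi t <= phi t.
Proof. pose proof (Psi_bounds (t + h)). pose proof (phi_pos t). nra. Qed.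

Lemma is_integral_R_gauss_smooth h :
  is_integral_R (fun t => Psi (t + h) * phi t) (gauss_smooth Psi h).
Proof.
  apply (is_integral_R_dominated _ phi 1); [| | exact is_integral_R_phi].
  - apply continuous_gauss_smooth_integrand.
  - apply gauss_smooth_integrand_bounds.
Qed.

Lemma gauss_smooth_ge0 h : 0 <= gauss_smooth Psi h.
Proof.
  apply (is_integral_R_ge0 _ _ (is_integral_R_gauss_smooth h)).
  intros t. apply gauss_smooth_integrand_bounds.
Qed.

Lemma gauss_smooth_le h h' : h <= h' -> gauss_smooth Psi h <= gauss_smooth Psi h'.
Proof.
  intros Hh.
  apply (is_integral_R_le _ _ _ _ (is_integral_R_gauss_smooth h) (is_integral_R_gauss_smooth h')).
  intros t. apply Rmult_le_compat_r; [apply Rlt_le, phi_pos | apply Psi_le; lra].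
Qed.

Lemma gauss_smooth_ge h a :
  0 <= a -> Psi (h - a) * (1 - 2 * exp (- a ^ 2 / 2)) <= gauss_smooth Psi h.
Proof.
  intros Ha.
  assert (Hmass : 1 - 2 * exp (- a ^ 2 / 2) <= RInt phi (- a) a).
  { rewrite <- Phi_sub, Phi_opp. pose proof (Phi_tail_le a Ha). lra. }
  apply Rle_trans with (RInt (fun t => Psi (h - a) * phi t) (- a) a).
  - rewrite RInt_scal_R by apply ex_RInt_phi.
    apply Rmult_le_compat_l; [apply Psi_bounds | exact Hmass].
  - apply Rle_trans with (RInt (fun t => Psi (t + h) * phi t) (- a) a).
    + apply RInt_le; [lra | apply ex_RInt_continuous_R | apply ex_RInt_continuous_R | ].
      * intros x. apply continuous_mult_R; [apply continuous_const | apply continuous_phi].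
      * apply continuous_gauss_smooth_integrand.
      * intros t Ht. apply Rmult_le_compat_r; [apply Rlt_le, phi_pos | apply Psi_le; lra].
    + apply (is_integral_R_RInt_le _ _ _ _ (is_integral_R_gauss_smooth h)); [| lra].
      intros t. apply gauss_smooth_integrand_bounds.
Qed.

Lemma gauss_smooth_le_shift h a : gauss_smooth Psi h <= Psi (h + a) + exp (/ 2 - a).
Proof.
  assert (Hdom : is_integral_R (fun t => Psi (h + a) * phi t + exp (/ 2 - a) * phi (t - 1))
                   (Psi (h + a) * 1 + exp (/ 2 - a) * 1)).
  { apply is_integral_R_plus; apply is_integral_R_scal.
    - apply is_integral_R_phi.
    - apply is_integral_R_shift, is_integral_R_phi. }
  rewrite <- (Rmult_1_r (Psi (h + a))), <- (Rmult_1_r (exp _)).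
  apply (is_integral_R_le _ _ _ _ (is_integral_R_gauss_smooth h) Hdom).
  intros t. pose proof (phi_pos t). pose proof (phi_pos (t - 1)). pose proof (exp_pos (/ 2 - a)).
  pose proof (Psi_bounds (t + h)). pose proof (Psi_bounds (h + a)).
  destruct (Rle_or_lt t a) as [Hta | Hta].
  - assert (Psi (t + h) <= Psi (h + a)) by (apply Psi_le; lra). nra.
  - pose proof (phi_le_exp_mul_phi_pred a t (Rlt_le _ _ Hta)). nra.
Qed.

End GaussSmooth.

Lemma is_integral_R_gauss_smooth_Phi_compl h :
  is_integral_R (fun t => (1 - Phi (t + h)) * phi t) (1 - gauss_smooth Phi h).
Proof.
  apply (is_integral_R_ext (fun t => phi t - Phi (t + h) * phi t)); [intros t; ring |].
  apply is_integral_R_minus; [exact is_integral_R_phi |].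
  apply is_integral_R_gauss_smooth; [exact continuous_Phi | exact Phi_bounds].
Qed.

Lemma gauss_smooth_Phi_le h : 0 <= h -> gauss_smooth Phi h <= 1 - phi (h / 2 + 1) ^ 2.
Proof.
  intros Hh. pose proof (phi_pos (h / 2 + 1)). set (c := phi (h / 2 + 1)) in *.
  assert (Hc : forall t, - h / 2 - 1 <= t <= - h / 2 -> c * c <= (1 - Phi (t + h)) * phi t).
  { intros t Ht. apply Rmult_le_compat; [lra | lra | |].
    - pose proof (Phi_tail_ge (h / 2) ltac:(lra)). pose proof (Phi_le (t + h) (h / 2) ltac:(lra)).
      unfold c. lra.
    - apply phi_le_abs, Rabs_le. lra. }
  assert (Hint : RInt (fun _ => c * c) (- h / 2 - 1) (- h / 2) <= 1 - gauss_smooth Phi h).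
  { apply Rle_trans with (RInt (fun t => (1 - Phi (t + h)) * phi t) (- h / 2 - 1) (- h / 2)).
    - apply RInt_le; [lra | apply ex_RInt_const | |].
      + apply ex_RInt_continuous_R. intros x. apply continuous_mult_R; [| apply continuous_phi].
        apply (@continuous_minus R_UniformSpace R_AbsRing R_NormedModule);
          [apply continuous_const | apply continuous_shift, continuous_Phi].
      + intros t Ht. apply Hc. lra.
    - apply (is_integral_R_RInt_le _ _ _ _ (is_integral_R_gauss_smooth_Phi_compl h)); [| lra].
      intros t. pose proof (Phi_bounds (t + h)). pose proof (phi_pos t). nra. }
  rewrite RInt_const in Hint.
  unfold scal in Hint; simpl in Hint; unfold mult in Hint; simpl in Hint.
  replace (- h / 2 - (- h / 2 - 1)) with 1 in Hint by field. nra.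
Qed.

Lemma Phi_compl_mul_phi_le h t : 0 <= h ->
  (1 - Phi (t + h)) * phi t <=
  exp (- h ^ 2 / 4) * phi (t + h / 2) + exp (- h ^ 2 / 2) * phi (t + h).
Proof.
  intros Hh. pose proof (phi_pos t). pose proof (phi_pos (t + h)). pose proof (phi_pos (t + h / 2)).
  pose proof (exp_pos (- h ^ 2 / 4)). pose proof (exp_pos (- h ^ 2 / 2)).
  pose proof (Phi_bounds (t + h)).
  assert (Hc : 0 < / sqrt (2 * PI)) by apply Rinv_0_lt_compat, sqrt_2PI_pos.
  destruct (Rle_or_lt 0 (t + h)) as [Hth | Hth].
  - pose proof (Phi_tail_le (t + h) Hth).
    assert (exp (- (t + h) ^ 2 / 2) * phi t <= exp (- h ^ 2 / 4) * phi (t + h / 2)).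
    { unfold phi, Rdiv. rewrite <- !Rmult_assoc, <- !exp_plus. apply Rmult_le_compat_r; [lra |].
      apply exp_le_compat. pose proof (pow2_ge_0 (t + h / 2)). nra. }
    nra.
  - assert (phi t <= exp (- h ^ 2 / 2) * phi (t + h)).
    { unfold phi, Rdiv. rewrite <- !Rmult_assoc, <- !exp_plus. apply Rmult_le_compat_r; [lra |].
      apply exp_le_compat. nra. }
    nra.
Qed.

Lemma gauss_smooth_Phi_ge h : 0 <= h -> 1 - 2 * exp (- h ^ 2 / 4) <= gauss_smooth Phi h.
Proof.
  intros Hh.
  assert (Hdom : is_integral_R
                   (fun t => exp (- h ^ 2 / 4) * phi (t + h / 2) + exp (- h ^ 2 / 2) * phi (t + h))
                   (exp (- h ^ 2 / 4) * 1 + exp (- h ^ 2 / 2) * 1)).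
  { apply is_integral_R_plus; apply is_integral_R_scal, is_integral_R_shift, is_integral_R_phi. }
  pose proof (is_integral_R_le _ _ _ _ (is_integral_R_gauss_smooth_Phi_compl h) Hdom
                (fun t => Phi_compl_mul_phi_le h t Hh)).
  assert (exp (- h ^ 2 / 2) <= exp (- h ^ 2 / 4)) by (apply exp_le_compat; nra).
  lra.
Qed.

Lemma continuous_Phi_pow k x : continuous (fun y => Phi y ^ k) x.
Proof.
  induction k as [|k IH]; simpl; [apply continuous_const |].
  apply continuous_mult_R; [apply continuous_Phi | exact IH].
Qed.

Lemma Phi_pow_le k x y : x <= y -> Phi x ^ k <= Phi y ^ k.
Proof. intros Hxy. apply pow_incr. split; [apply Phi_bounds | apply Phi_le, Hxy]. Qed.

Lemma Phi_pow_bounds k x : 0 <= Phi x ^ k <= 1.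
Proof.
  pose proof (Phi_bounds x). split; [apply pow_le; lra |].
  rewrite <- (pow1 k). apply pow_incr. lra.
Qed.

Lemma Phi_pow_ge k x : 0 <= x -> 1 - INR k * exp (- x ^ 2 / 2) <= Phi x ^ k.
Proof.
  intros Hx. pose proof (Phi_tail_le x Hx). pose proof (Phi_bounds x). pose proof (pos_INR k).
  replace (Phi x) with (1 - (1 - Phi x)) by ring.
  pose proof (one_sub_mul_le_pow (1 - Phi x) k ltac:(lra)). nra.
Qed.

Lemma Phi_pow_le_exp k x : 0 <= x -> Phi x ^ k <= exp (- (INR k * phi (x + 1))).
Proof.
  intros Hx. pose proof (Phi_tail_ge x Hx). pose proof (Phi_bounds x). pose proof (pos_INR k).
  replace (Phi x) with (1 - (1 - Phi x)) by ring.
  eapply Rle_trans; [apply pow_le_exp_opp_mul; lra |]. apply exp_le_compat. nra.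
Qed.

Lemma gauss_smooth_Phi_pow_le k h h' :
  h <= h' -> gauss_smooth (fun y => Phi y ^ k) h <= gauss_smooth (fun y => Phi y ^ k) h'.
Proof.
  apply gauss_smooth_le; [apply continuous_Phi_pow | apply Phi_pow_le | apply Phi_pow_bounds].
Qed.

Lemma pow_gauss_smooth_Phi_le k h h' : h <= h' -> gauss_smooth Phi h ^ k <= gauss_smooth Phi h' ^ k.
Proof.
  intros Hh. apply pow_incr. split.
  - apply gauss_smooth_ge0; [exact continuous_Phi | exact Phi_bounds].
  - apply gauss_smooth_le; [exact continuous_Phi | exact Phi_le | exact Phi_bounds | exact Hh].
Qed.

Lemma eventually_ge1 : eventually (fun k => (1 <= k)%nat).
Proof. exists 1%nat. intros k Hk. exact Hk. Qed.

Lemma eventually_ln_INR_ge T : eventually (fun k => T <= ln (INR k)).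
Proof.
  assert (H : is_lim_seq (fun k => ln (INR k)) p_infty).
  { apply (is_lim_comp_seq ln INR p_infty p_infty); [exact is_lim_ln_p | | exact is_lim_seq_INR].
    apply filter_forall. intros k. discriminate. }
  apply is_lim_seq_spec in H. apply (filter_imp _ _ (fun k Hk => Rlt_le _ _ Hk) (H T)).
Qed.

Lemma is_lim_seq_two_sqrt_ln_INR : is_lim_seq (fun k => 2 * sqrt (ln (INR k))) p_infty.
Proof.
  apply (is_lim_seq_le_p_loc (fun k => sqrt (ln (INR k)))).
  - apply filter_forall. intros k. pose proof (sqrt_pos (ln (INR k))). lra.
  - apply is_lim_seq_spec. intros M. apply (filter_imp (fun k => (Rmax M 0 + 1) ^ 2 <= ln (INR k))).
    + intros k Hk. pose proof (Rmax_l M 0). pose proof (Rmax_r M 0).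
      apply Rlt_le_trans with (Rmax M 0 + 1); [lra |].
      rewrite <- (sqrt_pow2 (Rmax M 0 + 1)) by lra. apply sqrt_le_1_alt, Hk.
    + apply eventually_ln_INR_ge.
Qed.

Lemma is_lim_seq_p_infty_of_bounded_sub (u v : nat -> R) D :
  is_lim_seq v p_infty -> eventually (fun k => Rabs (u k - v k) <= D) -> is_lim_seq u p_infty.
Proof.
  intros Hv HD. apply (is_lim_seq_le_p_loc (fun k => v k - D)).
  - revert HD. apply filter_imp. intros k Hk. apply Rabs_le_between in Hk. lra.
  - apply (is_lim_seq_minus _ _ p_infty D); [exact Hv | apply is_lim_seq_const | reflexivity].
Qed.

Lemma is_lim_seq_div_of_bounded_sub (u v : nat -> R) D :
  is_lim_seq v p_infty -> eventually (fun k => Rabs (u k - v k) <= D) ->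
  is_lim_seq (fun k => u k / v k) 1.
Proof.
  intros Hv HD.
  assert (Hinv : is_lim_seq (fun k => D * / v k) 0).
  { replace (Finite 0) with (Rbar_mult D 0) by (simpl; f_equal; ring).
    apply is_lim_seq_scal_l. apply (is_lim_seq_inv _ p_infty Hv). discriminate. }
  assert (Hpos : eventually (fun k => 0 < v k)) by (apply is_lim_seq_spec in Hv; apply (Hv 0)).
  apply (is_lim_seq_le_le_loc (fun k => 1 - D * / v k) _ (fun k => 1 + D * / v k)).
  - generalize (filter_and _ _ Hpos HD). apply filter_imp. intros k [Hk Hd].
    apply Rabs_le_between in Hd.
    replace (u k / v k) with (1 + (u k - v k) * / v k) by (field; lra).
    assert (0 < / v k) by (apply Rinv_0_lt_compat, Hk). nra.
  - replace (Finite 1) with (Finite (1 - 0)) by (f_equal; ring).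
    apply is_lim_seq_minus'; [apply is_lim_seq_const | exact Hinv].
  - replace (Finite 1) with (Finite (1 + 0)) by (f_equal; ring).
    apply is_lim_seq_plus'; [apply is_lim_seq_const | exact Hinv].
Qed.

(** * Locating the two constants *)

Section Quantiles.

Variable p : R.
Hypothesis Hp : 0 < p < 1.

Lemma h1_lt k h x a :
  gauss_smooth (fun y => Phi y ^ k) h = p -> 0 <= x -> 0 <= a ->
  INR k * exp (- x ^ 2 / 2) <= (1 - p) / 4 -> exp (- a ^ 2 / 2) <= (1 - p) / 4 -> h < x + a.
Proof.
  intros Hh Hx Ha Hxk Hak.
  apply (lt_of_nondecreasing _ _ _ (gauss_smooth_Phi_pow_le k)). rewrite Hh.
  assert (Hlow : Phi x ^ k * (1 - 2 * exp (- a ^ 2 / 2))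
                 <= gauss_smooth (fun y => Phi y ^ k) (x + a)).
  { replace x with (x + a - a) at 1 by ring.
    apply (gauss_smooth_ge (fun y => Phi y ^ k));
      [apply continuous_Phi_pow | apply Phi_pow_le | apply Phi_pow_bounds | exact Ha]. }
  assert ((3 + p) / 4 <= Phi x ^ k) by (pose proof (Phi_pow_ge k x Hx); lra).
  assert ((1 + p) / 2 <= 1 - 2 * exp (- a ^ 2 / 2)) by lra.
  nra.
Qed.

Lemma h1_gt k h x :
  gauss_smooth (fun y => Phi y ^ k) h = p -> 0 <= x -> 2 / p <= INR k * phi (x + 1) ->
  x - (/ 2 + 2 / p) < h.
Proof.
  intros Hh Hx Hxk. set (a := / 2 + 2 / p).
  apply (lt_of_nondecreasing _ _ _ (gauss_smooth_Phi_pow_le k)). rewrite Hh.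
  assert (Hup : gauss_smooth (fun y => Phi y ^ k) (x - a) <= Phi x ^ k + exp (/ 2 - a)).
  { replace x with (x - a + a) at 2 by ring.
    apply (gauss_smooth_le_shift (fun y => Phi y ^ k));
      [apply continuous_Phi_pow | apply Phi_pow_le | apply Phi_pow_bounds]. }
  assert (Hp2 : 0 < 2 / p) by (apply Rdiv_lt_0_compat; lra).
  assert (Hp2' : / (2 / p) = p / 2) by (field; lra).
  assert (exp (/ 2 - a) < p / 2).
  { replace (/ 2 - a) with (- (2 / p)) by (unfold a; ring). rewrite <- Hp2'.
    apply exp_opp_lt_inv, Hp2. }
  assert (Phi x ^ k < p / 2).
  { eapply Rle_lt_trans; [apply Phi_pow_le_exp, Hx |].
    eapply Rle_lt_trans; [apply exp_le_compat, Ropp_le_contravar, Hxk |].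
    rewrite <- Hp2'. apply exp_opp_lt_inv, Hp2. }
  lra.
Qed.

Lemma h2_lt k h y : (1 <= k)%nat ->
  gauss_smooth Phi h ^ k = p -> 0 <= y -> 2 * INR k * exp (- y ^ 2 / 4) <= (1 - p) / 2 -> h < y.
Proof.
  intros Hk Hh Hy Hyk.
  apply (lt_of_nondecreasing (fun z => gauss_smooth Phi z ^ k) _ _ (pow_gauss_smooth_Phi_le k)).
  cbv beta. rewrite Hh.
  assert (1 <= INR k) by (apply (le_INR 1); exact Hk).
  pose proof (exp_pos (- y ^ 2 / 4)).
  pose proof (one_sub_mul_le_pow (2 * exp (- y ^ 2 / 4)) k ltac:(nra)).
  assert ((1 - 2 * exp (- y ^ 2 / 4)) ^ k <= gauss_smooth Phi y ^ k)
    by (apply pow_incr; pose proof (gauss_smooth_Phi_ge y Hy); nra).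
  nra.
Qed.

Lemma h2_gt k h y :
  gauss_smooth Phi h ^ k = p -> 0 <= y -> / p <= INR k * phi (y / 2 + 1) ^ 2 -> y < h.
Proof.
  intros Hh Hy Hyk.
  apply (lt_of_nondecreasing (fun z => gauss_smooth Phi z ^ k) _ _ (pow_gauss_smooth_Phi_le k)).
  cbv beta. rewrite Hh.
  pose proof (gauss_smooth_Phi_le y Hy) as Hup.
  pose proof (gauss_smooth_ge0 Phi continuous_Phi Phi_bounds y) as Hpos.
  apply Rle_lt_trans with (exp (- (INR k * phi (y / 2 + 1) ^ 2))).
  - eapply Rle_trans; [apply pow_incr; split; [exact Hpos | exact Hup] |].
    apply pow_le_exp_opp_mul. lra.
  - eapply Rle_lt_trans; [apply exp_le_compat, Ropp_le_contravar, Hyk |].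
    rewrite <- (Rinv_inv p) at 2. apply exp_opp_lt_inv, Rinv_0_lt_compat. lra.
Qed.

(* Each test point below makes the relevant [INR k * exp (...)] equal to exp (- c) or exp c,
   its square being ln k + c or ln k - c up to a constant factor; the constants c are chosen
   so that exp (- c) < / c and c < exp c supply the margins required above. *)

Lemma sqrt2_h1_le k h : (1 <= k)%nat -> gauss_smooth (fun y => Phi y ^ k) h = p ->
  sqrt 2 * h <= 2 * sqrt (ln (INR k)) + 4 * sqrt (4 / (1 - p)).
Proof.
  intros Hk Hh. pose proof (ln_INR_ge0 k Hk) as HL.
  set (L := ln (INR k)) in *. set (c := 4 / (1 - p)).
  assert (Hc : 0 < c) by (apply Rdiv_lt_0_compat; lra).
  assert (Hec : exp (- c) <= (1 - p) / 4).
  { left. replace ((1 - p) / 4) with (/ c) by (unfold c; field; lra). apply exp_opp_lt_inv, Hc. }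
  assert (Hlt : h < sqrt 2 * sqrt (L + c) + sqrt 2 * sqrt c).
  { apply (h1_lt k); [exact Hh | apply Rmult_le_pos; apply sqrt_pos .. | |].
    - rewrite sqrt2_mul_sqrt_sqr by lra. replace (- (2 * (L + c)) / 2) with (- (L + c)) by field.
      unfold L. rewrite INR_mul_exp_opp_ln_add by exact Hk. exact Hec.
    - rewrite sqrt2_mul_sqrt_sqr by lra. replace (- (2 * c) / 2) with (- c) by field. exact Hec. }
  pose proof (sqrt_add_le L c HL (Rlt_le _ _ Hc)).
  apply Rmult_lt_compat_l with (r := sqrt 2) in Hlt; [| apply sqrt_lt_R0; lra].
  rewrite Rmult_plus_distr_l, <- !Rmult_assoc, sqrt2_mul_sqrt2 in Hlt. lra.
Qed.

Lemma sqrt2_h1_ge k h : (1 <= k)%nat -> 2 * sqrt (2 * PI) / p + / 2 <= ln (INR k) ->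
  gauss_smooth (fun y => Phi y ^ k) h = p ->
  2 * sqrt (ln (INR k)) - (2 * sqrt (2 * sqrt (2 * PI) / p) + sqrt 2 * (3 / 2 + 2 / p))
    <= sqrt 2 * h.
Proof.
  intros Hk HkL Hh. set (L := ln (INR k)) in *. set (c := 2 * sqrt (2 * PI) / p) in *.
  pose proof sqrt_2PI_pos as Hs.
  assert (Hc : 0 < c) by (apply Rdiv_lt_0_compat; lra).
  set (u := sqrt 2 * sqrt (L - c)).
  assert (Hu2 : u ^ 2 = 2 * (L - c)) by (apply sqrt2_mul_sqrt_sqr; lra).
  assert (Hu : 1 <= u) by (assert (0 <= u) by (apply Rmult_le_pos; apply sqrt_pos); nra).
  assert (Hlt : u - 1 - (/ 2 + 2 / p) < h).
  { apply (h1_gt k); [exact Hh | lra |].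
    replace (u - 1 + 1) with u by ring. unfold phi.
    replace (- u ^ 2 / 2) with (- (L + - c)) by (rewrite Hu2; field).
    unfold Rdiv. rewrite <- Rmult_assoc. unfold L.
    rewrite INR_mul_exp_opp_ln_add, Ropp_involutive by exact Hk.
    pose proof (exp_ineq1_le c).
    apply (Rmult_le_reg_r (sqrt (2 * PI))); [exact Hs |].
    rewrite (Rmult_assoc (exp c)), Rinv_l, Rmult_1_r by lra.
    replace (2 * / p * sqrt (2 * PI)) with c by (unfold c; field; lra). lra. }
  pose proof (sqrt_le_sub_add L c ltac:(lra)).
  apply Rmult_lt_compat_l with (r := sqrt 2) in Hlt; [| apply sqrt_lt_R0; lra].
  unfold u in Hlt. rewrite !Rmult_minus_distr_l, <- Rmult_assoc, sqrt2_mul_sqrt2 in Hlt. lra.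
Qed.

Lemma h2_le k h : (1 <= k)%nat -> gauss_smooth Phi h ^ k = p ->
  h <= 2 * sqrt (ln (INR k)) + 2 * sqrt (4 / (1 - p)).
Proof.
  intros Hk Hh. pose proof (ln_INR_ge0 k Hk) as HL.
  set (L := ln (INR k)) in *. set (c := 4 / (1 - p)).
  assert (Hc : 0 < c) by (apply Rdiv_lt_0_compat; lra).
  assert (Hlt : h < 2 * sqrt (L + c)).
  { apply (h2_lt k); [exact Hk | exact Hh | pose proof (sqrt_pos (L + c)); lra |].
    replace (- (2 * sqrt (L + c)) ^ 2 / 4) with (- (L + c))
      by (rewrite Rpow_mult_distr, pow2_sqrt by lra; field).
    rewrite Rmult_assoc. unfold L. rewrite INR_mul_exp_opp_ln_add by exact Hk.
    assert (exp (- c) < (1 - p) / 4); [| lra].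
    replace ((1 - p) / 4) with (/ c) by (unfold c; field; lra). apply exp_opp_lt_inv, Hc. }
  pose proof (sqrt_add_le L c HL (Rlt_le _ _ Hc)). lra.
Qed.

Lemma h2_ge k h : (1 <= k)%nat -> 2 * PI / p + 1 <= ln (INR k) -> gauss_smooth Phi h ^ k = p ->
  2 * sqrt (ln (INR k)) - (2 * sqrt (2 * PI / p) + 2) <= h.
Proof.
  intros Hk HkL Hh. set (L := ln (INR k)) in *. set (c := 2 * PI / p) in *.
  pose proof Rgt_2PI_0.
  assert (Hc : 0 < c) by (apply Rdiv_lt_0_compat; lra).
  set (v := sqrt (L - c)).
  assert (Hv2 : v ^ 2 = L - c) by (apply pow2_sqrt; lra).
  assert (Hv : 1 <= v) by (unfold v; rewrite <- sqrt_1; apply sqrt_le_1_alt; lra).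
  assert (Hlt : 2 * v - 2 < h).
  { apply (h2_gt k); [exact Hh | lra |].
    replace ((2 * v - 2) / 2 + 1) with v by field. rewrite phi_sqr, Hv2.
    replace (- (L - c)) with (- (L + - c)) by ring.
    unfold Rdiv. rewrite <- Rmult_assoc. unfold L.
    rewrite INR_mul_exp_opp_ln_add, Ropp_involutive by exact Hk.
    pose proof (exp_ineq1_le c).
    apply (Rmult_le_reg_r (2 * PI)); [lra |].
    rewrite (Rmult_assoc (exp c)), Rinv_l, Rmult_1_r by lra.
    replace (/ p * (2 * PI)) with c by (unfold c; field; lra). lra. }
  pose proof (sqrt_le_sub_add L c ltac:(lra)) as Hsqrt. fold v in Hsqrt. lra.
Qed.

Lemma h1_asymptotic (h1 : nat -> R) :
  (forall k, (1 <= k)%nat -> gauss_smooth (fun y => Phi y ^ k) (h1 k) = p) ->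
  exists D, eventually (fun k => Rabs (sqrt 2 * h1 k - 2 * sqrt (ln (INR k))) <= D).
Proof.
  intros H1.
  set (Cu := 4 * sqrt (4 / (1 - p))).
  set (Cl := 2 * sqrt (2 * sqrt (2 * PI) / p) + sqrt 2 * (3 / 2 + 2 / p)).
  assert (0 <= Cu) by (unfold Cu; pose proof (sqrt_pos (4 / (1 - p))); lra).
  assert (0 <= Cl).
  { unfold Cl. pose proof (sqrt_pos (2 * sqrt (2 * PI) / p)). pose proof (sqrt_pos 2).
    assert (0 < 2 / p) by (apply Rdiv_lt_0_compat; lra). nra. }
  exists (Cu + Cl).
  generalize (filter_and _ _ eventually_ge1 (eventually_ln_INR_ge (2 * sqrt (2 * PI) / p + / 2))).
  apply filter_imp. intros k [Hk HkL]. apply Rabs_le.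
  pose proof (sqrt2_h1_le k (h1 k) Hk (H1 k Hk)).
  pose proof (sqrt2_h1_ge k (h1 k) Hk HkL (H1 k Hk)).
  unfold Cu, Cl in *. lra.
Qed.

Lemma h2_asymptotic (h2 : nat -> R) :
  (forall k, (1 <= k)%nat -> gauss_smooth Phi (h2 k) ^ k = p) ->
  exists D, eventually (fun k => Rabs (h2 k - 2 * sqrt (ln (INR k))) <= D).
Proof.
  intros H2.
  set (Cu := 2 * sqrt (4 / (1 - p))). set (Cl := 2 * sqrt (2 * PI / p) + 2).
  assert (0 <= Cu) by (unfold Cu; pose proof (sqrt_pos (4 / (1 - p))); lra).
  assert (0 <= Cl) by (unfold Cl; pose proof (sqrt_pos (2 * PI / p)); lra).
  exists (Cu + Cl).
  generalize (filter_and _ _ eventually_ge1 (eventually_ln_INR_ge (2 * PI / p + 1))).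
  apply filter_imp. intros k [Hk HkL]. apply Rabs_le.
  pose proof (h2_le k (h2 k) Hk (H2 k Hk)).
  pose proof (h2_ge k (h2 k) Hk HkL (H2 k Hk)).
  unfold Cu, Cl in *. lra.
Qed.

End Quantiles.

Theorem theorem6 (p : R) (h1 h2 : nat -> R) :
  0 < p < 1 ->
  (forall k : nat, (1 <= k)%nat ->
     integral_R (fun t => Phi (t + h1 k) ^ k * phi t) = p) ->
  (forall k : nat, (1 <= k)%nat ->
     (integral_R (fun t => Phi (t + h2 k) * phi t)) ^ k = p) ->
  is_lim_seq (fun k => h2 k / (sqrt 2 * h1 k)) 1 /\
  is_lim_seq (fun k => sqrt 2 * h1 k / (2 * sqrt (ln (INR k)))) 1.
Proof.
  intros Hp H1 H2.
  destruct (h1_asymptotic p Hp h1 H1) as [D1 HD1].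
  destruct (h2_asymptotic p Hp h2 H2) as [D2 HD2].
  pose proof is_lim_seq_two_sqrt_ln_INR as Hs.
  split.
  - apply (is_lim_seq_div_of_bounded_sub _ _ (D1 + D2)).
    + exact (is_lim_seq_p_infty_of_bounded_sub _ _ D1 Hs HD1).
    + generalize (filter_and _ _ HD1 HD2). apply filter_imp. intros k [Hk1 Hk2].
      apply Rabs_le_between in Hk1. apply Rabs_le_between in Hk2. apply Rabs_le. lra.
  - exact (is_lim_seq_div_of_bounded_sub _ _ D1 Hs HD1).
Qed.
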